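(* Let $G$ be a 5-vertex-critical $(P_5,\text{chair})$-free graph and let $C=v_1v_2v_3v_4v_5v_1$ be an induced $C_5$ in $G$. Then $|S^1_3(i)|\le 2$ for all $1\le i\le 5$.
   Context: All graphs are finite and simple; $P_5$ is the path on 5 vertices; the chair is a $P_4$ plus a vertex adjacent to exactly one of the two middle vertices of the $P_4$; ''$H$-free'' means no induced subgraph isomorphic to $H$; $G$ is $k$-vertex-critical if $\chi(G)=k$ and $\chi(G-v)<k$ for all $v$. Indices modulo 5. $S^1_3(i)=\{v\in V(G)\setminus V(C): N(v)\cap V(C)=\{v_{i-1},v_i,v_{i+1}\}\}$. *)

From mathcomp Require Import all_boot.
Set Implicit Arguments. Unset Strict Implicit. Unset Printing Implicit Defensive.

Definition simple_graph (T : finType) (e : rel T) := symmetric e /\ irreflexive e.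

Definition colorable (T : finType) (e : rel T) (A : {set T}) (k : nat) : bool :=
  [exists f : {ffun T -> 'I_k},
     [forall x in A, forall y in A, e x y ==> (f x != f y)]].

Lemma colorable_exists (T : finType) (e : rel T) (A : {set T}) (irr : irreflexive e) :
  exists k, colorable e A k.
Proof.
exists #|T|; apply/existsP; exists [ffun x => enum_rank x].
apply/forall_inP => x _; apply/forall_inP => y _; apply/implyP => Exy.
rewrite !ffunE; apply/negP => /eqP /enum_rank_inj Hxy; subst y.
by rewrite irr in Exy.
Qed.

(* Chromatic number of the subgraph of a simple graph induced by A
   (for a non-simple relation it is defined as 0, irrelevant below). *)
Definition chi (T : finType) (e : rel T) (A : {set T}) : nat :=
  match boolP [forall x, ~~ e x x] with
  | AltTrue H => ex_minn (@colorable_exists T e A (fun x => negbTE (forallP H x)))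
  | AltFalse _ => 0
  end.

Definition vertex_critical (T : finType) (e : rel T) (k : nat) : Prop :=
  chi e [set: T] = k /\ forall v : T, chi e ([set: T] :\ v) < k.

Definition induced_copy (T : finType) (e : rel T) (n : nat) (h : rel 'I_n)
  (f : 'I_n -> T) : Prop :=
  injective f /\ forall i j, e (f i) (f j) = h i j.

Definition H_free (T : finType) (e : rel T) (n : nat) (h : rel 'I_n) : Prop :=
  forall f : 'I_n -> T, ~ induced_copy e h f.

Definition P5 : rel 'I_5 := fun i j => (i.+1 == j :> nat) || (j.+1 == i :> nat).

Definition chair_edge (a b : nat) : bool :=
  [|| (a == 0) && (b == 1), (a == 1) && (b == 2), (a == 2) && (b == 3)
    | (a == 1) && (b == 4)].
Definition chair : rel 'I_5 := fun i j => chair_edge i j || chair_edge j i.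

Definition C5 : rel 'I_5 :=
  fun i j => ((i.+1 %% 5) == j :> nat) || ((j.+1 %% 5) == i :> nat).

(* S^1_3(i) w.r.t. the induced cycle C = v_0 ... v_4: vertices outside C whose
   neighbourhood on C is exactly {v_{i-1}, v_i, v_{i+1}} (indices mod 5). *)
Definition S13 (T : finType) (e : rel T) (v : 'I_5 -> T) (i : 'I_5) : {set T} :=
  [set x | [forall j, x != v j] &&
           [forall j : 'I_5, e x (v j) ==
              [|| (j == i :> nat), (j == (i.+1 %% 5) :> nat) | (j == (i + 4) %% 5 :> nat)]]].

From mathcomp Require Import all_boot.

Set Implicit Arguments.
Unset Strict Implicit.
Unset Printing Implicit Defensive.

(* Write p0 p1 p2 p3 for v_i, v_(i+1),
   v_(i+2), v_(i+3): every x in S^1_3(i) sees p0 and p1 but neither p2 nor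
   p3, and p1 p2 p3 is an induced path.
   - Chair-freeness makes S^1_3(i) a clique: two non-adjacent members a, b
     together with p1, p2, p3 would induce a chair (path a p1 p2 p3, with b
     hanging at p1).
   - Three members of S^1_3(i) together with p0 and p1 would then form a K5
     avoiding p2; but in a k-vertex-critical graph every k-clique meets every
     vertex, since a k-clique in G - u forces chi(G - u) >= k. *)

Lemma chi_colorable (T : finType) (e : rel T) (A : {set T}) :
  irreflexive e -> colorable e A (chi e A).
Proof.
(* destruct, unlike case, abstracts the dependent match inside chi. *)
move=> irr; rewrite /chi.
destruct (boolP [forall x, ~~ e x x]) as [loopless | no_loops].
  by case: ex_minnP.
by case/negP: no_loops; apply/forallP => x; rewrite irr.
Qed.

(* A k-clique inside A needs k colours: a colouring is injective on it. *)
Lemma clique_le_chi (T : finType) (e : rel T) (A : {set T}) (k : nat)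
    (g : 'I_k -> T) :
  irreflexive e -> (forall j, g j \in A) ->
  (forall j l, j != l -> e (g j) (g l)) -> k <= chi e A.
Proof.
move=> irr gA clique; case/existsP: (chi_colorable A irr) => f /forall_inP proper.
have inj : injective (fun j => f (g j)).
  move=> j l; apply: contra_eq => njl.
  exact: implyP (forall_inP (proper _ (gA j)) _ (gA l)) (clique _ _ njl).
by have := leq_card _ inj; rewrite !card_ord.
Qed.

(* In a k-vertex-critical graph every k-clique contains every vertex u:
   otherwise it is a k-clique of G - u, and chi(G - u) < k fails. *)
Lemma critical_clique_covers (T : finType) (e : rel T) (k : nat)
    (g : 'I_k -> T) (u : T) :
  irreflexive e -> vertex_critical e k ->
  (forall j l, j != l -> e (g j) (g l)) -> exists j, g j = u.
Proof.
move=> irr [_ crit] clique.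
case: (pickP (fun j => g j == u)) => [j /eqP gj | avoid]; first by exists j.
have := crit u; rewrite ltnNge => /negP []; apply: clique_le_chi irr _ clique.
by move=> j; rewrite !inE avoid.
Qed.

Lemma ord5_ind (P : 'I_5 -> Prop) :
  P (@Ordinal 5 0 isT) -> P (@Ordinal 5 1 isT) -> P (@Ordinal 5 2 isT) ->
  P (@Ordinal 5 3 isT) -> P (@Ordinal 5 4 isT) -> forall j, P j.
Proof.
move=> P0 P1 P2 P3 P4 [[|[|[|[|[|j]]]]] lt_j5] //;
  by rewrite (bool_irrelevance lt_j5 isT).
Qed.

Section ChairFreeCritical.

Variables (T : finType) (e : rel T).
Hypotheses (sym : symmetric e) (irr : irreflexive e).
Hypothesis chair_free : H_free e chair.

Lemma no_loop (u : T) : ~~ e u u.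
Proof. by rewrite irr. Qed.

Lemma neq_by_neighbour (x y z : T) : e x z -> ~~ e y z -> x != y.
Proof. by move=> exz; apply: contraNneq => <-. Qed.

(* Two distinct vertices adjacent to the end p1 of an induced path p1 p2 p3
   and to no other vertex of it are adjacent: otherwise a, p1, p2, p3, b
   induce a chair. *)
Lemma chair_free_adjacent (a b p1 p2 p3 : T) :
  e p1 p2 -> e p2 p3 -> ~~ e p1 p3 ->
  e a p1 -> ~~ e a p2 -> ~~ e a p3 ->
  e b p1 -> ~~ e b p2 -> ~~ e b p3 -> a != b -> e a b.
Proof.
move=> e12 e23 n13 a1 a2 a3 b1 b2 b3 nab; apply/negPn/negP => nab_e.
have n31 : ~~ e p3 p1 by rewrite sym.
have [e1a n3a] : e p1 a /\ ~~ e p3 a by rewrite !(sym _ a).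
have [na1 na2 na3] : [/\ a != p1, a != p2 & a != p3].
  split; first exact: neq_by_neighbour a1 (no_loop p1).
    by rewrite eq_sym; apply: neq_by_neighbour e23 a3.
  exact: neq_by_neighbour a1 n31.
have [nb1 nb2 nb3] : [/\ b != p1, b != p2 & b != p3].
  split; first exact: neq_by_neighbour b1 (no_loop p1).
    by rewrite eq_sym; apply: neq_by_neighbour e23 b3.
  exact: neq_by_neighbour b1 n31.
have [neq12 neq23 neq13] : [/\ p1 != p2, p2 != p3 & p1 != p3].
  split; first exact: neq_by_neighbour e12 (no_loop p2).
    exact: neq_by_neighbour e23 (no_loop p3).
  exact: neq_by_neighbour e1a n3a.
apply: (@chair_free (fun j : 'I_5 => nth a [:: a; p1; p2; p3; b] j)); split.
  by move=> j l; apply: contra_eq; elim/ord5_ind: j; elim/ord5_ind: l;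
    rewrite //= eq_sym.
move: a2 a3 b2 b3 n13 nab_e => /negbTE a2 /negbTE a3 /negbTE b2 /negbTE b3
  /negbTE n13 /negbTE nab_e.
by elim/ord5_ind; elim/ord5_ind; rewrite /= /chair /chair_edge /= ?irr // sym.
Qed.

Hypothesis crit : vertex_critical e 5.

(* Then at most two vertices are adjacent to both p0 and p1 and to neither
   p2 nor p3: three of them would, with p0 and p1, form a K5 avoiding p2. *)
Lemma common_neighbours_le2 (S : {set T}) (p0 p1 p2 p3 : T) :
  e p0 p1 -> ~~ e p0 p2 -> e p1 p2 -> e p2 p3 -> ~~ e p1 p3 ->
  (forall x, x \in S -> [/\ e x p0, e x p1, ~~ e x p2 & ~~ e x p3]) ->
  #|S| <= 2.
Proof.
move=> e01 n02 e12 e23 n13 nbrS.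
rewrite leqNgt; apply/negP => /card_gt2P [x [y [z [[xS yS zS] [nxy nyz nzx]]]]].
have adjS a b : a \in S -> b \in S -> a != b -> e a b.
  move=> /nbrS [_ a1 a2 a3] /nbrS [_ b1 b2 b3];
  exact: chair_free_adjacent e12 e23 n13 a1 a2 a3 b1 b2 b3.
have exy := adjS _ _ xS yS nxy; have eyz := adjS _ _ yS zS nyz.
have ezx := adjS _ _ zS xS nzx.
have [x0 x1 x2 _] := nbrS _ xS; have [y0 y1 y2 _] := nbrS _ yS.
have [z0 z1 z2 _] := nbrS _ zS.
have n20 : ~~ e p2 p0 by rewrite sym.
have [neq12 neq02] : p1 != p2 /\ p0 != p2.
  split; first exact: neq_by_neighbour e12 (no_loop p2).
  by apply: (@neq_by_neighbour _ _ x); rewrite // sym.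
have [nx2 ny2 nz2] : [/\ x != p2, y != p2 & z != p2].
  by split; apply: neq_by_neighbour n20.
have [j Kj] : exists j : 'I_5, nth x [:: x; y; z; p0; p1] j = p2.
  apply: critical_clique_covers irr crit _ => j l.
  by elim/ord5_ind: j; elim/ord5_ind: l; rewrite //= sym.
by move: Kj; elim/ord5_ind: j => /= /eqP; apply/negP.
Qed.

End ChairFreeCritical.

Lemma S13_neighbours (T : finType) (e : rel T) (v : 'I_5 -> T) (i : 'I_5) x :
  x \in S13 e v i ->
  [/\ e x (v i), e x (v (ordS i)), ~~ e x (v (ordS (ordS i)))
    & ~~ e x (v (ordS (ordS (ordS i))))].
Proof.
rewrite inE => /andP [_ /forallP nbr]; rewrite !(eqP (nbr _)) {nbr}.
by case: i => [[|[|[|[|[|i]]]]] lt_i5].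
Qed.

Lemma C5_window (i : 'I_5) :
  [/\ C5 i (ordS i), ~~ C5 i (ordS (ordS i)), C5 (ordS i) (ordS (ordS i)),
      C5 (ordS (ordS i)) (ordS (ordS (ordS i)))
    & ~~ C5 (ordS i) (ordS (ordS (ordS i)))].
Proof. by case: i => [[|[|[|[|[|i]]]]] lt_i5]. Qed.

Theorem mainTheorem13 (T : finType) (e : rel T) (v : 'I_5 -> T) :
  simple_graph e ->
  vertex_critical e 5 ->
  H_free e P5 ->
  H_free e chair ->
  induced_copy e C5 v ->
  forall i : 'I_5, #|S13 e v i| <= 2.
Proof.
move=> [sym irr] crit _ chair_free [_ cycle] i.
have [e01 n02 e12 e23 n13] := C5_window i.
apply: (common_neighbours_le2 sym irr chair_free crit (p0 := v i)
  (p1 := v (ordS i)) (p2 := v (ordS (ordS i))) (p3 := v (ordS (ordS (ordS i)))));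
  rewrite ?cycle //.
exact: S13_neighbours.
Qed.
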